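(* Let $Y$ be a finite connected simple undirected graph. If $Y$ is not bipartite then $\delta(Y)=\tfrac12\kappa(Y)$. If $Y$ is bipartite then $\delta(Y)=\tfrac12(\kappa(Y)+1)$.
   Context: $\mathsf{Acyc}(Y)$ is the set of acyclic orientations of $Y$. A click at a vertex $x$ that is a source of an orientation reverses all edges incident to $x$, making $x$ a sink. Two acyclic orientations are $\kappa$-equivalent if one can be transformed into the other by a finite sequence of clicks; $\kappa(Y)$ is the number of $\kappa$-equivalence classes. For $O\in\mathsf{Acyc}(Y)$ let $O^{\mathrm{rev}}$ denote the orientation with every edge reversed. $\delta$-equivalence is the equivalence relation on $\mathsf{Acyc}(Y)$ generated by clicks and by $O\mapsto O^{\mathrm{rev}}$, and $\delta(Y)$ is the number of $\delta$-equivalence classes. *)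

From mathcomp Require Import all_boot.
Set Implicit Arguments. Unset Strict Implicit. Unset Printing Implicit Defensive.

Section Orientations.
Variables (T : finType) (e : rel T).

Definition simple_graph := symmetric e /\ irreflexive e.
Definition connected_graph := forall x y : T, connect e x y.
Definition bipartite := exists c : T -> bool, forall x y, e x y -> c x != c y.

Definition arcs (O : {set T * T}) : rel T := fun x y => (x, y) \in O.

Definition is_orientation (O : {set T * T}) : bool :=
  [forall x, forall y,
     (((x, y) \in O) ==> e x y) &&
     (e x y ==> (((x, y) \in O) (+) ((y, x) \in O)))].

Definition is_acyclic (O : {set T * T}) : bool :=
  [forall x, forall y, ((x, y) \in O) ==> ~~ connect (arcs O) y x].

Definition Acyc : {set {set T * T}} :=
  [set O | is_orientation O && is_acyclic O].

Definition is_source (O : {set T * T}) (x : T) : bool :=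
  [forall y, (y, x) \notin O].

Definition click (O : {set T * T}) (x : T) : {set T * T} :=
  [set p | if (p.1 == x) || (p.2 == x) then (p.2, p.1) \in O else p \in O].

Definition rev_orient (O : {set T * T}) : {set T * T} :=
  [set p | (p.2, p.1) \in O].

Definition click_step (O O' : {set T * T}) : bool :=
  [&& O \in Acyc, O' \in Acyc & [exists x, is_source O x && (O' == click O x)]].

Definition rev_step (O O' : {set T * T}) : bool :=
  [&& O \in Acyc, O' \in Acyc & O' == rev_orient O].

Definition sym_closure (r : rel {set T * T}) : rel {set T * T} :=
  fun O O' => r O O' || r O' O.

Definition kappa_equiv : rel {set T * T} := connect (sym_closure click_step).
Definition delta_equiv : rel {set T * T} :=
  connect (sym_closure (fun O O' => click_step O O' || rev_step O O')).

Definition num_classes (R : rel {set T * T}) : nat :=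
  #|[set [set O' in Acyc | R O O'] | O in Acyc]|.

Definition kappa : nat := num_classes kappa_equiv.
Definition delta : nat := num_classes delta_equiv.

End Orientations.

From Stdlib Require Import ZArith Lia.
From mathcomp Require Import all_boot zify.
Set Implicit Arguments. Unset Strict Implicit. Unset Printing Implicit Defensive.

(* Clicking a source x changes the +-1 sign function of an orientation by the
   coboundary of twice the indicator of x, so kappa-equivalent orientations
   differ by a coboundary.  If O is kappa-equivalent to its reverse, the sign
   function of O is itself a coboundary: O is induced by a height function k
   with |k x - k y| = 1 along edges, and the parity of k two-colours the graph.
   Conversely, on a bipartite connected graph every height function descends,
   by repeatedly clicking its maxima, to one with values in {0, 1}; there are
   only two of those, inducing mutually reverse and kappa-equivalent
   orientations.  So exactly one kappa-class is closed under reversal when the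
   graph is bipartite, and none otherwise.  As a delta-class is the union of a
   kappa-class and its reverse, counting gives the theorem. *)

Lemma connect_ind (A : finType) (r : rel A) (P : A -> Prop) :
  (forall x y, P x -> r x y -> P y) -> forall x y, P x -> connect r x y -> P y.
Proof.
move=> Pr x y Px /connectP[p r_p ->].
elim: p x Px r_p => //= z p IHp x Px /andP[rxz r_p].
exact: IHp (Pr _ _ Px rxz) r_p.
Qed.

Section Orientations.
Variables (T : finType) (e : rel T).
Hypothesis esym : symmetric e.
Hypothesis eirr : irreflexive e.
Implicit Types (O : {set T * T}) (x y : T).

Local Notation A := (Acyc e).
Local Notation kap := (kappa_equiv e).
Local Notation del := (delta_equiv e).
Local Notation rev := (@rev_orient T).

Lemma AcycE O : (O \in A) = is_orientation e O && is_acyclic O.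
Proof. by rewrite inE. Qed.

Lemma Acyc_arc_edge O x y : O \in A -> (x, y) \in O -> e x y.
Proof.
by rewrite AcycE => /andP[/forallP/(_ x)/forallP/(_ y)/andP[/implyP] ].
Qed.

Lemma Acyc_edge_xor O x y : O \in A -> e x y -> ((x, y) \in O) (+) ((y, x) \in O).
Proof.
by rewrite AcycE => /andP[/forallP/(_ x)/forallP/(_ y)/andP[_ /implyP] ].
Qed.

Lemma in_rev_orient O p : (p \in rev O) = ((p.2, p.1) \in O).
Proof. by rewrite inE. Qed.

Lemma rev_orientK O : rev (rev O) = O.
Proof. by apply/setP => -[x y]; rewrite !inE. Qed.

Lemma connect_rev_orient O x y :
  connect (arcs (rev O)) x y = connect (arcs O) y x.
Proof.
have /= <- := connect_rev (arcs O) x y; apply: eq_connect => a b.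
by rewrite /arcs in_rev_orient.
Qed.

Lemma rev_orient_Acyc O : O \in A -> rev O \in A.
Proof.
move=> OA; rewrite AcycE; apply/andP; split.
  apply/forallP=> x; apply/forallP=> y; rewrite !in_rev_orient /=.
  apply/andP; split; first by apply/implyP => /(Acyc_arc_edge OA); rewrite esym.
  by apply/implyP => exy; rewrite addbC Acyc_edge_xor // esym.
apply/forallP=> x; apply/forallP=> y; apply/implyP.
rewrite in_rev_orient connect_rev_orient /= => yx.
by move: OA; rewrite AcycE => /andP[_ /forallP/(_ y)/forallP/(_ x)/implyP]; apply.
Qed.

Lemma in_click O x p : (p \in click O x) =
  (if (p.1 == x) || (p.2 == x) then (p.2, p.1) \in O else p \in O).
Proof. by rewrite inE. Qed.

Lemma clickK O x : click (click O x) x = O.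
Proof. by apply/setP => -[a b]; rewrite !in_click /=; case: (a == x); case: (b == x). Qed.

Lemma rev_orient_click O x : rev (click O x) = click (rev O) x.
Proof. by apply/setP => -[a b]; rewrite !(in_click, in_rev_orient) /= orbC; case: ifP. Qed.

(* Reversal turns a source into a sink, so a click is undone by a click
   of the reversed orientations. *)
Lemma click_step_rev O O' : click_step e O O' -> click_step e (rev O') (rev O).
Proof.
case/and3P => OA O'A /existsP[x /andP[/forallP srcx /eqP eO']]; subst O'.
apply/and3P; split; rewrite ?rev_orient_Acyc //.
apply/existsP; exists x; rewrite rev_orient_click clickK eqxx andbT.
by apply/forallP => y; rewrite in_click /= eqxx orbT in_rev_orient.
Qed.

Lemma kappa_equiv_sym O O' : kap O O' = kap O' O.
Proof. by apply: sym_connect_sym => a b; rewrite /sym_closure orbC. Qed.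

Lemma kappa_equiv_refl O : kap O O.
Proof. exact: connect0. Qed.

Lemma kappa_equiv_trans O1 O2 O3 : kap O1 O2 -> kap O2 O3 -> kap O1 O3.
Proof. exact: connect_trans. Qed.

Lemma kappa_equiv_click O O' : click_step e O O' -> kap O O'.
Proof. by move=> st; apply: connect1; rewrite /sym_closure st. Qed.

Lemma kappa_equiv_rev O O' : kap O O' -> kap (rev O) (rev O').
Proof.
apply: (@connect_ind _ _ (fun z => kap (rev O) (rev z))); last exact: kappa_equiv_refl.
move=> z w kz /orP[] /click_step_rev st; apply: (kappa_equiv_trans kz).
  by rewrite kappa_equiv_sym; apply: kappa_equiv_click.
exact: kappa_equiv_click.
Qed.

Lemma kappa_equiv_Acyc O O' : O \in A -> kap O O' -> O' \in A.
Proof.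
by move=> OA; apply: (@connect_ind _ _ (fun z => z \in A)) => // z w _ /orP[]/and3P[].
Qed.

Lemma delta_equiv_sym O O' : del O O' = del O' O.
Proof. by apply: sym_connect_sym => a b; rewrite /sym_closure orbC. Qed.

Lemma delta_equiv_trans O1 O2 O3 : del O1 O2 -> del O2 O3 -> del O1 O3.
Proof. exact: connect_trans. Qed.

Lemma kappa_delta_equiv O O' : kap O O' -> del O O'.
Proof. by apply: connect_sub => a b /orP[] st; apply: connect1; rewrite /sym_closure st ?orbT. Qed.

Lemma delta_equiv_rev O : O \in A -> del O (rev O).
Proof.
move=> OA; apply: connect1; rewrite /sym_closure /rev_step.
by rewrite OA rev_orient_Acyc // eqxx !orbT.
Qed.

Lemma delta_equivE O O' : O \in A -> del O O' = kap O O' || kap O (rev O').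
Proof.
move=> OA; apply/idP/idP; last first.
  case/orP => k; first exact: kappa_delta_equiv.
  apply: (delta_equiv_trans (kappa_delta_equiv k)).
  by rewrite -{2}(rev_orientK O') delta_equiv_rev // (kappa_equiv_Acyc OA k).
apply: (@connect_ind _ _ (fun z => kap O z || kap O (rev z))); last by rewrite kappa_equiv_refl.
move=> z w kz st; have {}st : kap z w \/ w = rev z.
  case/orP: st => /orP[st | /and3P[_ _ /eqP E]].
  - by left; apply: kappa_equiv_click.
  - by right.
  - by left; rewrite kappa_equiv_sym; apply: kappa_equiv_click.
  - by right; rewrite E rev_orientK.
case: st => [kzw | ->]; last by rewrite rev_orientK orbC.
case/orP: kz => kz; apply/orP; [left | right]; apply: (kappa_equiv_trans kz).
  exact: kzw.
exact: kappa_equiv_rev.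
Qed.

(** * The coboundary invariant *)

Definition arc_sign O x y : Z := if (x, y) \in O then 1%Z else (-1)%Z.

Lemma arc_sign_rev O x y : arc_sign (rev O) x y = arc_sign O y x.
Proof. by rewrite /arc_sign in_rev_orient. Qed.

Definition differ_by_coboundary O O' := exists k : T -> Z,
  forall x y, e x y -> arc_sign O' x y = (arc_sign O x y - 2 * (k x - k y))%Z.

Lemma differ_by_coboundary_sym O O' :
  differ_by_coboundary O O' -> differ_by_coboundary O' O.
Proof. by case=> k Hk; exists (fun z => - k z)%Z => x y /Hk; lia. Qed.

Lemma differ_by_coboundary_trans O1 O2 O3 :
  differ_by_coboundary O1 O2 -> differ_by_coboundary O2 O3 -> differ_by_coboundary O1 O3.
Proof.
case=> k Hk [k' Hk']; exists (fun z => k z + k' z)%Z => x y exy.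
by have := Hk x y exy; have := Hk' x y exy; lia.
Qed.

Lemma click_step_coboundary O O' : click_step e O O' -> differ_by_coboundary O O'.
Proof.
case/and3P => OA _ /existsP[x /andP[/forallP srcx /eqP ->]].
exists (fun z => if z == x then 1%Z else 0%Z) => a b eab.
rewrite /arc_sign !in_click /=.
have := Acyc_edge_xor OA eab.
case: (eqVneq a x) => [ea|na]; case: (eqVneq b x) => [eb|nb] /=.
- by subst; rewrite eirr in eab.
- by subst a; have := srcx b; case: ((b, x) \in O); case: ((x, b) \in O) => //= _ _; lia.
- by subst b; have := srcx a; case: ((a, x) \in O); case: ((x, a) \in O) => //= _ _; lia.
- lia.
Qed.

Lemma kappa_equiv_coboundary O O' : kap O O' -> differ_by_coboundary O O'.
Proof.
apply: (@connect_ind _ _ (differ_by_coboundary O)); last by exists (fun=> 0%Z) => *; lia.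
move=> z w cz /orP[] /click_step_coboundary c; apply: (differ_by_coboundary_trans cz) => //.
exact: differ_by_coboundary_sym.
Qed.

(* Since arc_sign (rev O) = - arc_sign O, the coboundary relating O to its
   reverse is twice the sign function of O. *)
Lemma self_reverse_height O : O \in A -> kap O (rev O) ->
  exists k : T -> Z, forall x y, e x y ->
    ((x, y) \in O <-> k x = (k y + 1)%Z) /\ (k x = (k y + 1)%Z \/ k y = (k x + 1)%Z).
Proof.
move=> OA /kappa_equiv_coboundary[k Hk]; exists k => x y exy.
have := Hk x y exy; have := Acyc_edge_xor OA exy.
rewrite arc_sign_rev /arc_sign.
case: ((x, y) \in O); case: ((y, x) \in O) => // _; cbv iota => E;
  by split; [split => h; first [done | exfalso; lia | lia] | lia].
Qed.

Lemma self_reverse_bipartite O : O \in A -> kap O (rev O) -> bipartite e.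
Proof.
move=> OA /(self_reverse_height OA)[k Hk]; exists (fun z => Z.odd (k z)) => x y exy.
by have [_ [->|->]] := Hk x y exy; rewrite Z.add_1_r Z.odd_succ -Z.negb_odd; case: Z.odd.
Qed.

(** * Height functions *)

Definition height_function (g : T -> nat) :=
  forall x y, e x y -> g x = (g y).+1 \/ g y = (g x).+1.

Definition height_orient (g : T -> nat) : {set T * T} :=
  [set p | e p.1 p.2 && (g p.2 < g p.1)].

Lemma in_height_orient g p : (p \in height_orient g) = e p.1 p.2 && (g p.2 < g p.1).
Proof. by rewrite inE. Qed.

Lemma eq_height_orient g1 g2 : g1 =1 g2 -> height_orient g1 = height_orient g2.
Proof. by move=> E; apply/setP => p; rewrite !in_height_orient !E. Qed.

Lemma connect_height_orient g a b : connect (arcs (height_orient g)) a b -> g b <= g a.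
Proof.
apply: (@connect_ind _ _ (fun z => g z <= g a)) => // z w.
by rewrite /arcs in_height_orient /= => ? /andP[_]; lia.
Qed.

Lemma height_orient_Acyc g : height_function g -> height_orient g \in A.
Proof.
move=> hg; rewrite AcycE; apply/andP; split.
  apply/forallP=> x; apply/forallP=> y; rewrite !in_height_orient /=.
  apply/andP; split; first by apply/implyP => /andP[].
  by apply/implyP => exy; rewrite exy -esym exy /=; have := hg x y exy; lia.
apply/forallP=> x; apply/forallP=> y; apply/implyP.
by rewrite in_height_orient /= => /andP[_ lt]; apply/negP => /connect_height_orient; lia.
Qed.

Definition lower2 (g : T -> nat) x z := if z == x then g x - 2 else g z.

Section LowerMaximum.
Variables (g : T -> nat) (x : T).
Hypotheses (hg : height_function g) (gmax : forall y, g y <= g x) (gx2 : 2 <= g x).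

Lemma height_max_neighbour y : e x y -> g y = (g x).-1.
Proof. by move=> exy; have := gmax y; have := hg exy; lia. Qed.

Lemma lower2_height_function : height_function (lower2 g x).
Proof.
move=> a b eab; rewrite /lower2.
case: (eqVneq a x) => [ea|na]; case: (eqVneq b x) => [eb|nb].
- by subst; rewrite eirr in eab.
- by subst a; have := height_max_neighbour eab; lia.
- by subst b; rewrite esym in eab; have := height_max_neighbour eab; lia.
- exact: hg.
Qed.

(* A maximum of g is a source of the induced orientation; lowering it by
   two makes it a sink. *)
Lemma click_step_lower2 : click_step e (height_orient g) (height_orient (lower2 g x)).
Proof.
have hl := lower2_height_function.
apply/and3P; split; rewrite ?height_orient_Acyc //.
apply/existsP; exists x; apply/andP; split.
  apply/forallP => y; rewrite in_height_orient /= esym.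
  by apply/negP => /andP[/height_max_neighbour]; lia.
apply/eqP/setP => -[a b]; rewrite in_click !in_height_orient /= /lower2.
case: (eqVneq a x) => [ea|na]; case: (eqVneq b x) => [eb|nb] //=.
- by subst; rewrite eirr.
- subst a; rewrite [e b x]esym; case exb: (e x b) => //=.
  by have := height_max_neighbour exb; lia.
- subst b; rewrite [e a x]esym; case exa: (e x a) => //=.
  by have := height_max_neighbour exa; lia.
Qed.

End LowerMaximum.

Lemma descend_height n g : \sum_z g z <= n -> height_function g ->
  exists g0, [/\ height_function g0, (forall z, g0 z <= 1),
                 (forall z, odd (g0 z) = odd (g z)) & kap (height_orient g) (height_orient g0)].
Proof.
elim: n g => [|n IHn] g sumg hg.
  exists g; split=> //; last exact: kappa_equiv_refl.
  by move=> z; move: sumg; rewrite (bigD1 z) //=; lia.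
have [x1 /= gx1 | low] := pickP (fun z => 1 < g z); last first.
  exists g; split=> //; last exact: kappa_equiv_refl.
  by move=> z; have := low z; rewrite /= ltnNge => /negbFE.
have [x gxE] : {x | \max_z g z = g x} by apply: eq_bigmax; apply/card_gt0P; exists x1.
have gmax y : g y <= g x by rewrite -gxE leq_bigmax.
have gx2 : 2 <= g x by have := gmax x1; lia.
have sumg' : \sum_z lower2 g x z <= n.
  have E : \sum_(z | z != x) lower2 g x z = \sum_(z | z != x) g z.
    by apply: eq_bigr => z /negbTE; rewrite /lower2 => ->.
  rewrite (bigD1 x) //= E {1}/lower2 eqxx.
  by move: sumg; rewrite (bigD1 x) //=; lia.
have [g0 [hg0 g0le od0 k0]] := IHn _ sumg' (lower2_height_function hg gmax gx2).
exists g0; split=> //.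
  by move=> z; rewrite od0 /lower2; case: eqP => // ->; rewrite oddB // addbF.
exact: kappa_equiv_trans (kappa_equiv_click (click_step_lower2 hg gmax gx2)) k0.
Qed.

Lemma two_level_self_reverse g : height_function g -> (forall z, g z <= 1) ->
  kap (height_orient g) (rev (height_orient g)).
Proof.
move=> hg gle1.
pose h z := 2 - g z.
have hh : height_function h.
  by move=> x y exy; have := gle1 x; have := gle1 y; have := hg x y exy; rewrite /h; lia.
have -> : rev (height_orient g) = height_orient h.
  apply/setP => -[a b]; rewrite in_rev_orient !in_height_orient /= [e b a]esym /h.
  by case: (e a b) => //=; have := gle1 a; have := gle1 b; lia.
have [g0 [_ g0le od0 k0]] := descend_height (leqnn _) hh.
have E : g0 =1 g.
  move=> z; have := od0 z; have := g0le z; have := gle1 z; rewrite /h.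
  by case: (g z) => [|[|m]] //; case: (g0 z) => [|[|m']].
by rewrite kappa_equiv_sym -(eq_height_orient E).
Qed.

Hypothesis econn : connected_graph e.

(* Along an edge both level functions change value, so whether they agree is
   constant on the connected graph. *)
Lemma two_level_unique g1 g2 : height_function g1 -> height_function g2 ->
    (forall z, g1 z <= 1) -> (forall z, g2 z <= 1) ->
  height_orient g2 = height_orient g1 \/ height_orient g2 = rev (height_orient g1).
Proof.
move=> hg1 hg2 le1 le2.
have agree x y : (g1 y == g2 y) = (g1 x == g2 x).
  apply: (@connect_ind _ _ (fun z => (g1 z == g2 z) = (g1 x == g2 x)) _ x y _ (econn x y)) => //.
  move=> z w <- ezw; have := hg1 z w ezw; have := hg2 z w ezw.
  have := le1 z; have := le1 w; have := le2 z; have := le2 w.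
  by move=> *; apply/idP/idP => /eqP ?; apply/eqP; lia.
have [x0 _ | empty] := pickP (@predT T); last first.
  by left; apply/setP => -[a b]; have := empty a.
have [E|E] := eqVneq (g1 x0) (g2 x0); [left | right];
  apply/setP => -[a b]; rewrite ?in_rev_orient !in_height_orient /=.
  by move: (agree x0 a) (agree x0 b); rewrite E eqxx => /eqP-> /eqP->.
move: (agree x0 a) (agree x0 b); rewrite (negbTE E) => /eqP Ea /eqP Eb.
rewrite [e b a]esym; case: (e a b) => //=.
have := le1 a; have := le1 b; have := le2 a; have := le2 b.
by move=> *; apply/idP/idP => ?; lia.
Qed.

(** * Counting classes *)

Definition kappa_class O := [set O' in A | kap O O'].
Definition delta_class O := [set O' in A | del O O'].
Definition delta_closure (C : {set {set T * T}}) := [set O' in A | [exists O in C, del O O']].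

Lemma in_kappa_class O O' : (O' \in kappa_class O) = (O' \in A) && kap O O'.
Proof. by rewrite in_set. Qed.

Lemma in_delta_class O O' : (O' \in delta_class O) = (O' \in A) && del O O'.
Proof. by rewrite in_set. Qed.

Lemma in_delta_closure C O' :
  (O' \in delta_closure C) = (O' \in A) && [exists O in C, del O O'].
Proof. by rewrite in_set. Qed.

Lemma kappa_class_eq O1 O2 : kap O1 O2 -> kappa_class O1 = kappa_class O2.
Proof.
move=> k12; apply/setP => O; rewrite !in_kappa_class; apply: andb_id2l => _.
apply/idP/idP => k; last exact: kappa_equiv_trans k12 k.
by apply: (kappa_equiv_trans _ k); rewrite kappa_equiv_sym.
Qed.

Lemma delta_class_eq O1 O2 : del O1 O2 -> delta_class O1 = delta_class O2.
Proof.
move=> d12; apply/setP => O; rewrite !in_delta_class; apply: andb_id2l => _.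
apply/idP/idP => d; last exact: delta_equiv_trans d12 d.
by apply: (delta_equiv_trans _ d); rewrite delta_equiv_sym.
Qed.

Lemma eq_kappa_class O1 O2 : O2 \in A -> (kappa_class O1 == kappa_class O2) = kap O1 O2.
Proof.
move=> O2A; apply/idP/idP => [/eqP E | /kappa_class_eq -> //].
have : O2 \in kappa_class O2 by rewrite in_kappa_class O2A kappa_equiv_refl.
by rewrite -E in_kappa_class => /andP[].
Qed.

Lemma delta_closure_kappa_class O : O \in A -> delta_closure (kappa_class O) = delta_class O.
Proof.
move=> OA; apply/setP => O'; rewrite in_delta_closure in_delta_class; apply: andb_id2l => _.
apply/existsP/idP => [[O1] | dOO']; last by exists O; rewrite in_kappa_class OA kappa_equiv_refl.
by rewrite in_kappa_class => /andP[/andP[_ /kappa_delta_equiv]]; apply: delta_equiv_trans.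
Qed.

Lemma kappa_classes_in_delta_class O : O \in A ->
  [set C in [set kappa_class O1 | O1 in A] | delta_closure C == delta_class O] =
  [set kappa_class O; kappa_class (rev O)].
Proof.
move=> OA; apply/setP => C; rewrite in_set in_set2; apply/idP/idP.
  case/andP => /imsetP[O1 O1A ->]; rewrite delta_closure_kappa_class // => /eqP E.
  have : O1 \in delta_class O by rewrite -E in_delta_class O1A; apply: connect0.
  rewrite in_delta_class O1A delta_equivE //= => /orP[k | k].
    by rewrite (kappa_class_eq k) eqxx.
  by rewrite (kappa_class_eq (kappa_equiv_rev k)) rev_orientK eqxx orbT.
have rOA := rev_orient_Acyc OA.
case/orP => /eqP ->; rewrite imset_f // delta_closure_kappa_class //=.
by rewrite (delta_class_eq (delta_equiv_rev OA)).
Qed.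

Lemma card_kappa_classes_in_delta_class O : O \in A ->
  #|[set C in [set kappa_class O1 | O1 in A] | delta_closure C == delta_class O]| =
  if kap O (rev O) then 1 else 2.
Proof.
move=> OA; rewrite kappa_classes_in_delta_class // cards2.
by rewrite eq_kappa_class ?rev_orient_Acyc //; case: (kap _ _).
Qed.

Lemma kappa_sum_delta_classes : kappa e = \sum_(d in [set delta_class O | O in A])
   #|[set C in [set kappa_class O1 | O1 in A] | delta_closure C == d]|.
Proof.
rewrite /kappa /num_classes -/kap -sum1_card.
rewrite (partition_big delta_closure (fun d => d \in [set delta_class O | O in A])); last first.
  by move=> C /imsetP[O OA ->]; rewrite delta_closure_kappa_class // imset_f.
by apply: eq_bigr => d _; rewrite sum1_card; apply: eq_card => C; rewrite inE.
Qed.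

Lemma delta_card_classes : delta e = #|[set delta_class O | O in A]|.
Proof. by []. Qed.

Lemma nonbipartite_count : ~ bipartite e -> 2 * delta e = kappa e.
Proof.
move=> nbip; rewrite kappa_sum_delta_classes delta_card_classes.
rewrite (eq_bigr (fun=> 2)) ?sum_nat_const 1?mulnC //.
move=> d /imsetP[O OA ->]; rewrite card_kappa_classes_in_delta_class //.
by case k: (kap O (rev O)) => //; case: nbip; apply: self_reverse_bipartite k.
Qed.

Section Bipartite.
Variable c : T -> bool.
Hypothesis cbip : forall x y, e x y -> c x != c y.

Local Notation O0 := (height_orient (fun z => nat_of_bool (c z))).

Lemma colour_height_function : height_function (fun z => nat_of_bool (c z)).
Proof. by move=> x y /cbip; case: (c x); case: (c y) => //= _; [left | right]. Qed.

Lemma colour_orient_Acyc : O0 \in A.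
Proof. exact: height_orient_Acyc colour_height_function. Qed.

Lemma colour_orient_self_reverse : kap O0 (rev O0).
Proof. by apply: two_level_self_reverse colour_height_function _ => z; case: (c z). Qed.

(* The integer height of [self_reverse_height], shifted to be nonnegative. *)
Lemma self_reverse_height_orient O : O \in A -> kap O (rev O) ->
  exists2 g, height_function g & O = height_orient g.
Proof.
move=> OA /(self_reverse_height OA)[k Hk].
pose S := \max_z Z.to_nat (- k z)%Z.
have leS z : (- k z <= Z.of_nat S)%Z.
  by have := @leq_bigmax _ (fun z => Z.to_nat (- k z)%Z) z; rewrite -/S; lia.
exists (fun z => Z.to_nat (k z + Z.of_nat S)%Z).
  by move=> x y exy; have [_ [E|E]] := Hk x y exy; have := leS x; have := leS y; lia.
apply/setP => -[a b]; rewrite in_height_orient /=.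
case eab: (e a b) => /=; last by apply/negP => /(Acyc_arc_edge OA); rewrite eab.
have [[ab_up up_ab] step] := Hk a b eab; have := leS a; have := leS b.
by move=> *; apply/idP/idP => [/ab_up | ?]; [lia | apply/up_ab; lia].
Qed.

Lemma self_reverse_colour_orient O : O \in A -> kap O (rev O) -> kap O O0.
Proof.
move=> OA /(self_reverse_height_orient OA)[g hg ->].
have [g0 [hg0 g0le _ k0]] := descend_height (leqnn _) hg.
apply: (kappa_equiv_trans k0).
have [->|->] := two_level_unique colour_height_function hg0 (fun z => leq_b1 (c z)) g0le.
  exact: kappa_equiv_refl.
by rewrite kappa_equiv_sym; exact: colour_orient_self_reverse.
Qed.

Lemma bipartite_count : 2 * delta e = kappa e + 1.
Proof.
rewrite kappa_sum_delta_classes delta_card_classes.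
set D := [set delta_class O | O in A].
have O0D : delta_class O0 \in D by rewrite imset_f // colour_orient_Acyc.
rewrite (bigD1 (delta_class O0)) //= card_kappa_classes_in_delta_class ?colour_orient_Acyc //.
rewrite colour_orient_self_reverse (eq_bigr (fun=> 2)); last first.
  move=> d /andP[/imsetP[O OA ->] ne]; rewrite card_kappa_classes_in_delta_class //.
  case k: (kap O (rev O)) => //; case/negP: ne.
  by apply/eqP/delta_class_eq/kappa_delta_equiv/self_reverse_colour_orient.
rewrite (eq_bigl (mem (D :\ delta_class O0))); last by move=> d; rewrite !inE andbC.
by rewrite sum_nat_const (cardsD1 (delta_class O0) D) O0D; lia.
Qed.

End Bipartite.
End Orientations.

Theorem proposition3 (T : finType) (e : rel T) :
  simple_graph e -> connected_graph e ->
  (~ bipartite e -> 2 * delta e = kappa e) /\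
  (bipartite e -> 2 * delta e = kappa e + 1).
Proof.
move=> [esym eirr] econn; split=> [nbip | [c cbip]].
  exact: nonbipartite_count.
exact: (bipartite_count esym eirr econn cbip).
Qed.
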